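(* Let $0<\delta<1/\mathrm{e}$ and $\beta>0$, and let $k,m,w$ be positive integers with $m\le w$ and $k\ge m\ge \frac{2\mathrm{e}}{(1-\mathrm{e}\delta)^2}\left(1+\left(\beta+\tfrac12\right)\ln k\right)$. If $m$ balls are thrown independently and uniformly at random into $w$ bins, then the probability that the number of bins containing exactly one ball is less than $\delta m$ is at most $k^{-\beta}$. *)

From mathcomp Require Import all_boot.
From Stdlib Require Import Reals.
Set Implicit Arguments. Unset Strict Implicit. Unset Printing Implicit Defensive.

Definition outcome (m w : nat) := {ffun 'I_m -> 'I_w}.

Definition singletons (m w : nat) (f : outcome m w) : nat :=
  #|[set j : 'I_w | #|[set i : 'I_m | f i == j]| == 1%N]|.

Definition few_singletons (m w : nat) (delta : R) (f : outcome m w) : bool :=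
  if Rlt_dec (INR (singletons f)) (delta * INR m)%R then true else false.

(* Probability under the uniform distribution on all w^m outcomes
   (balls thrown independently and uniformly). *)
Definition prob_few_singletons (m w : nat) (delta : R) : R :=
  (INR #|[set f : outcome m w | few_singletons delta f]| /
   INR #|[set: outcome m w]|)%R.

From Stdlib Require Import Reals Lra Lia.
From Coquelicot Require Coquelicot.
From mathcomp Require all_boot all_order all_algebra Rstruct ring lra.

(* Write S(f) for the number of bins holding
   exactly one ball in the outcome f, and P for the probability of
   S(f) < delta m.  The proof is a Chernoff-type argument on generating
   functions.

   - Counting: for z, t >= 0 the generating function of S satisfies
       (sum_f z^S(f)) t^m <= m! (e^t - (1 - z) t)^w,
     since it equals m! [x^m] (e^x - x + z x)^w; we prove the inequality by
     induction on the bins, peeling off one bin at a time.  Markov's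
     inequality for a^S(f), 0 < a <= 1, then bounds the number of outcomes
     with few singletons.
   - Estimates: real-analysis facts, namely 1 - u <= e^(-u), the Stirling-type
     bound n! e^n <= e sqrt(n) n^n, ln a >= (a - 1/a)/2 on (0, 1], and the
     final numerical step.
   - With t = m/w, mu = m e^(-m/w) >= m/e and a = delta m / mu we get
       P^2 <= e^2 m exp (-(1 - e delta)^2 m / e) <= (m/k) k^(-2 beta),
     the last step by the assumed lower bound on m. *)

Module Estimates.
Import Coquelicot.Coquelicot.
Local Open Scope R_scope.

Lemma exp1_mul_lt_one delta : delta < / exp 1 -> exp 1 * delta < 1.
Proof.
intros Hd; pose proof (exp_pos 1).
apply Rmult_lt_compat_l with (r := exp 1) in Hd; [|lra].
rewrite Rinv_r in Hd by lra; exact Hd.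
Qed.

Lemma exp_le x y : x <= y -> exp x <= exp y.
Proof. intros [H| ->]; [left; apply exp_increasing|]; lra. Qed.

Lemma exp_pow x n : exp x ^ n = exp (INR n * x).
Proof.
induction n as [|n IH]; simpl; [rewrite Rmult_0_l, exp_0; ring|].
rewrite IH, <- exp_plus; destruct n; f_equal; simpl; ring.
Qed.

Lemma exp_opp_mul x : exp x * exp (- x) = 1.
Proof. rewrite <- exp_plus, Rplus_opp_r; apply exp_0. Qed.

Lemma exp_partial_sum_le t d : 0 <= t ->
  sum_f_R0 (fun i => / INR (Factorial.fact i) * t ^ i) d <= exp t.
Proof.
intros Ht; apply growing_ineq; [|exact (proj2_sig (exist_exp t))].
intros n; cbv beta; rewrite tech5; cut (0 <= / INR (Factorial.fact (S n)) * t ^ S n); [lra|].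
apply Rmult_le_pos; [left; apply Rinv_0_lt_compat, INR_fact_lt_0 | apply pow_le; lra].
Qed.

Lemma le_of_derive_nonneg f df a b : a <= b ->
  (forall x, a <= x <= b -> is_derive f x (df x)) ->
  (forall x, a <= x <= b -> 0 <= df x) -> f a <= f b.
Proof.
intros Hab Hd Hpos.
assert (Hin : forall x, Rmin a b <= x <= Rmax a b -> a <= x <= b)
  by (rewrite Rmin_left, Rmax_right; auto).
destruct (MVT_gen f a b df) as [c [Hc Heq]].
- intros x Hx; apply Hd, Hin; lra.
- intros x Hx; apply derivable_continuous_pt; exists (df x).
  apply is_derive_Reals, Hd, Hin, Hx.
- assert (0 <= df c * (b - a)) by (apply Rmult_le_pos; [apply Hpos, Hin|]; lra).
  lra.
Qed.

Lemma two_mul_le_sinh s : 0 <= s -> 2 * s <= exp s - exp (- s).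
Proof.
intros Hs.
cut (exp 0 - exp (- 0) - 2 * 0 <= exp s - exp (- s) - 2 * s);
  [rewrite Ropp_0, exp_0; lra|].
apply (le_of_derive_nonneg (fun x => exp x - exp (- x) - 2 * x)
  (fun x => exp x + exp (- x) - 2)); [exact Hs| |].
- intros x _; auto_derive; auto; ring.
- intros x _; pose proof (exp_opp_mul x); pose proof (exp_pos x).
  pose proof (exp_pos (- x)).
  assert (0 <= exp (- x) * (exp x - 1) ^ 2) by (apply Rmult_le_pos; [lra | apply pow2_ge_0]).
  nra.
Qed.

Lemma ln_nonpos a : 0 < a <= 1 -> ln a <= 0.
Proof. intros Ha; rewrite <- ln_1; apply ln_le; lra. Qed.

Lemma ln_ge_half_diff a : 0 < a <= 1 -> (a - / a) / 2 <= ln a.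
Proof.
intros Ha; pose proof (ln_nonpos a Ha).
pose proof (two_mul_le_sinh (- ln a)) as Hs.
rewrite Ropp_involutive, exp_Ropp, exp_ln in Hs by lra; lra.
Qed.

Lemma one_sub_mul_exp_le y : 0 <= y -> (1 - y) * exp y <= (1 + y) * exp (- y).
Proof.
intros Hy.
cut ((1 + 0) * exp (- 0) - (1 - 0) * exp 0 <= (1 + y) * exp (- y) - (1 - y) * exp y);
  [rewrite Ropp_0, exp_0; lra|].
apply (le_of_derive_nonneg (fun x => (1 + x) * exp (- x) - (1 - x) * exp x)
  (fun x => x * (exp x - exp (- x)))); [exact Hy| |].
- intros x _; auto_derive; auto; ring.
- intros x Hx; apply Rmult_le_pos; [|pose proof (two_mul_le_sinh x)]; lra.
Qed.

(* One step of the Stirling estimate: e^2 n^(2n+1) <= (n+1)^(2n+1),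
   obtained from the previous lemma with y = 1/(2n+1). *)
Lemma stirling_step n : (1 <= n)%nat ->
  exp 2 * INR n ^ (2 * n + 1) <= INR (S n) ^ (2 * n + 1).
Proof.
intros Hn; assert (HN : 1 <= INR n) by (apply (le_INR 1); exact Hn).
rewrite S_INR; set (y := / (2 * INR n + 1)).
assert (Hy : 0 < y) by (apply Rinv_0_lt_compat; lra).
assert (Hyy : y * (2 * INR n + 1) = 1) by (unfold y; field; lra).
assert (Hratio : exp (2 * y) * INR n <= INR n + 1).
{ pose proof (one_sub_mul_exp_le y (Rlt_le _ _ Hy)) as H.
  pose proof (exp_opp_mul y); pose proof (exp_pos y); pose proof (exp_pos (- y)).
  replace (2 * y) with (y + y) by ring; rewrite exp_plus.
  assert (Hsq : (1 - y) * exp y * exp y <= (1 + y) * exp (- y) * exp y)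
    by (apply Rmult_le_compat_r; lra).
  replace (1 - y) with (2 * INR n * y) in Hsq by lra.
  replace (1 + y) with (2 * (INR n + 1) * y) in Hsq by lra.
  nra. }
replace (exp 2) with (exp (2 * y) ^ (2 * n + 1)).
- rewrite <- Rpow_mult_distr; apply pow_incr; split; [|exact Hratio].
  apply Rmult_le_pos; [left; apply exp_pos | lra].
- rewrite exp_pow, plus_INR, mult_INR; f_equal; simpl; lra.
Qed.

Lemma stirling_bound n : (1 <= n)%nat ->
  (INR (Factorial.fact n) * exp (INR n)) ^ 2 <= exp 1 ^ 2 * INR n * INR n ^ (2 * n).
Proof.
induction n as [|n IH]; intros Hn; [lia|].
destruct (Nat.eq_dec n 0) as [->|Hn0]; [simpl; lra|].
specialize (IH ltac:(lia)); pose proof (stirling_step n ltac:(lia)) as St.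
assert (HN : 1 <= INR n) by (apply (le_INR 1); lia).
rewrite fact_simpl, mult_INR, S_INR, exp_plus.
rewrite S_INR in St; replace (exp 2) with (exp 1 ^ 2) in St
  by (rewrite exp_pow; f_equal; simpl; ring).
replace (2 * S n)%nat with (S (S (2 * n))) by lia.
replace (2 * n + 1)%nat with (S (2 * n)) in St by lia.
set (a := INR (Factorial.fact n) * exp (INR n)) in *.
set (N := INR n) in *; set (e := exp 1) in *.
assert (0 <= e ^ 2) by apply pow2_ge_0.
assert (0 <= (N + 1) ^ 2) by apply pow2_ge_0.
apply Rle_trans with ((N + 1) ^ 2 * e ^ 2 * (e ^ 2 * N * N ^ (2 * n))).
- replace (((N + 1) * INR (Factorial.fact n) * (exp N * e)) ^ 2)
    with ((N + 1) ^ 2 * e ^ 2 * a ^ 2) by (unfold a; ring).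
  apply Rmult_le_compat_l; [apply Rmult_le_pos|]; assumption.
- apply Rle_trans with ((N + 1) ^ 2 * e ^ 2 * (N + 1) ^ S (2 * n)); [|right; simpl; ring].
  apply Rmult_le_compat_l; [apply Rmult_le_pos; assumption|].
  replace (e ^ 2 * N * N ^ (2 * n)) with (e ^ 2 * N ^ S (2 * n)) by (simpl; ring); exact St.
Qed.


Lemma stirling_ratio n : (1 <= n)%nat ->
  (INR (Factorial.fact n) * exp (INR n) / INR n ^ n) ^ 2 <= exp 1 ^ 2 * INR n.
Proof.
intros Hn; assert (HN : 0 < INR n ^ n) by (apply pow_lt, lt_0_INR; lia).
pose proof (stirling_bound n Hn) as S.
rewrite pow_mult in S; replace ((INR n ^ 2) ^ n) with ((INR n ^ n) ^ 2) in S
  by (rewrite <- !pow_mult, Nat.mul_comm; reflexivity).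
unfold Rdiv; rewrite Rpow_mult_distr, pow_inv.
apply Rmult_le_reg_r with ((INR n ^ n) ^ 2); [apply pow_lt; lra|].
rewrite Rmult_assoc, Rinv_l by (apply pow_nonzero; lra); lra.
Qed.

(* Poissonization: (e^t - (1 - z) t)^w <= exp (w (t - (1 - z) t e^(-t))),
   from 1 - u <= e^(-u). *)
Lemma pow_exp_sub_le z t w : 0 <= z -> 0 <= t ->
  (exp t - (1 - z) * t) ^ w <= exp (INR w * (t - (1 - z) * t * exp (- t))).
Proof.
intros Hz Ht; set (u := (1 - z) * t * exp (- t)).
assert (Hbase : exp t - (1 - z) * t = exp t * (1 - u)).
{ unfold u; replace (exp t * (1 - (1 - z) * t * exp (- t)))
    with (exp t - (1 - z) * t * (exp t * exp (- t))) by ring.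
  rewrite exp_opp_mul; ring. }
assert (Hpos : 0 <= exp t - (1 - z) * t)
  by (pose proof (exp_ineq1_le t); assert (0 <= z * t) by nra; lra).
rewrite <- exp_pow; apply pow_incr; split; [exact Hpos|].
rewrite Hbase; replace (t - u) with (t + - u) by ring; rewrite exp_plus.
apply Rmult_le_compat_l; [left; apply exp_pos|].
pose proof (exp_ineq1_le (- u)); lra.
Qed.

Lemma chernoff_exponent a mu : 0 < a <= 1 -> 0 < mu ->
  2 * (- (1 - a) * mu - a * mu * ln a) <= - (mu * (1 - a) ^ 2).
Proof.
intros Ha Hmu; pose proof (ln_ge_half_diff a Ha) as Hln.
assert (H : a * mu * ((a - / a) / 2) <= a * mu * ln a)
  by (apply Rmult_le_compat_l; [nra | exact Hln]).
replace (a * mu * ((a - / a) / 2)) with (mu * (a * a - 1) / 2) in H by (field; lra).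
nra.
Qed.

Lemma gap_monotone d nu mu : 0 < d -> d <= nu <= mu ->
  nu * (1 - d / nu) ^ 2 <= mu * (1 - d / mu) ^ 2.
Proof.
intros Hd Hnm.
apply Rmult_le_reg_r with (mu * nu); [nra|].
replace (nu * (1 - d / nu) ^ 2 * (mu * nu)) with ((nu - d) ^ 2 * mu) by (field; lra).
replace (mu * (1 - d / mu) ^ 2 * (mu * nu)) with ((mu - d) ^ 2 * nu) by (field; lra).
assert (0 <= (mu - nu) * (mu * nu - d * d)) by (apply Rmult_le_pos; nra).
nra.
Qed.

Lemma tail_numeric c beta M K : 0 < c -> 1 <= M <= K ->
  2 * exp 1 / c * (1 + (beta + / 2) * ln K) <= M ->
  exp 1 ^ 2 * M * exp (- (c * M / exp 1)) <= Rpower K (- beta) ^ 2.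
Proof.
intros Hc HMK Hlow; set (e := exp 1) in *.
assert (He : 0 < e) by apply exp_pos.
assert (HL : 2 + (2 * beta + 1) * ln K <= c * M / e).
{ apply Rmult_le_reg_l with (2 * e / c); [apply Rdiv_lt_0_compat; lra|].
  replace (2 * e / c * (c * M / e)) with (2 * M) by (field; lra); lra. }
apply Rle_trans with (e ^ 2 * M * exp (- 2 - (2 * beta + 1) * ln K)).
- apply Rmult_le_compat_l; [nra | apply exp_le; lra].
- replace (e ^ 2 * M * exp (- 2 - (2 * beta + 1) * ln K))
    with (M * exp (- ln K) * (exp (- beta * ln K)) ^ 2).
  + unfold Rpower; rewrite exp_Ropp, exp_ln by lra.
    assert (M * / K <= 1) by (apply Rmult_le_reg_r with K; [lra|]; field_simplify; lra).
    assert (0 <= exp (- beta * ln K) ^ 2) by apply pow2_ge_0; nra.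
  + unfold e; rewrite !exp_pow, Rmult_assoc, <- exp_plus, (Rmult_comm (exp _) M),
      Rmult_assoc, <- exp_plus; f_equal; f_equal; simpl INR; ring.
Qed.

End Estimates.

Module Counting.
Import all_boot all_order all_algebra Rstruct ring lra.
Import Order.TTheory GRing.Theory Num.Theory.
Set Implicit Arguments. Unset Strict Implicit. Unset Printing Implicit Defensive.
Local Open Scope ring_scope.

Section GeneratingFunction.
Variables (m w : nat) (bin0 : 'I_w) (z t : R).
Hypotheses (z_ge0 : 0 <= z) (t_ge0 : 0 <= t).

(* A bin holding c balls contributes the factor z if c = 1 and 1 otherwise,
   so the product over all bins of an outcome f is z ^+ singletons f. *)
Definition weight (c : nat) : R := if c == 1%N then z else 1.

Definition fiber (D : {set 'I_m}) (f : {ffun 'I_m -> 'I_w}) (j : 'I_w) :=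
  [set x in D | f x == j].

(* Throws of the balls of D into the bins of J; the other balls are parked in
   bin0, so that these throws are total functions. *)
Definition throws (D : {set 'I_m}) (J : {set 'I_w}) :=
  [set f : {ffun 'I_m -> 'I_w} |
     [forall x, if x \in D then f x \in J else f x == bin0]].

Definition gf (D : {set 'I_m}) (J : {set 'I_w}) : R :=
  \sum_(f in throws D J) \prod_(j in J) weight #|fiber D f j|.

Definition send (A : {set 'I_m}) (j : 'I_w) (g : {ffun 'I_m -> 'I_w}) :=
  [ffun x => if x \in A then j else g x].
Definition park (A : {set 'I_m}) (f : {ffun 'I_m -> 'I_w}) :=
  [ffun x => if x \in A then bin0 else f x].

(* Throws of D into J whose fiber over j is A correspond, via send A j, to the
   throws of D :\: A into J :\ j. *)
Lemma send_throws (D A : {set 'I_m}) (J : {set 'I_w}) (j : 'I_w) g :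
  A \subset D -> j \in J ->
  [&& send A j g \in throws D J, fiber D (send A j g) j == A
    & park A (send A j g) == g] = (g \in throws (D :\: A) (J :\ j)).
Proof.
move=> AD jJ; apply/idP/idP.
- case/and3P; rewrite inE => /forallP sendJ /eqP fibA /eqP parkK.
  rewrite inE; apply/forallP=> x.
  have Ax : (x \in A) = (x \in D) && (send A j g x == j) by rewrite -[in LHS]fibA inE.
  move: (sendJ x); rewrite !ffunE in Ax *.
  rewrite in_setD in_setD1; case xA: (x \in A) => /=.
    by move=> _; rewrite -parkK ffunE xA.
  rewrite xA in Ax; case xD: (x \in D) Ax => //= /esym Ax gJ.
  by rewrite gJ Ax.
- rewrite inE => /forallP gD.
  have gx x : if (x \notin A) && (x \in D) then (g x != j) && (g x \in J)
              else g x == bin0 by move: (gD x); rewrite in_setD in_setD1.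
  apply/and3P; split.
  + rewrite inE; apply/forallP=> x; rewrite ffunE; move: (gx x).
    by case xA: (x \in A); [rewrite (subsetP AD x xA) jJ | case: (x \in D) => // /andP[]].
  + apply/eqP/setP=> x; rewrite !inE ffunE; move: (gx x).
    case xA: (x \in A); first by rewrite (subsetP AD x xA) eqxx.
    by case: (x \in D) => //= /andP[/negbTE ->].
  + apply/eqP/ffunP=> x; rewrite !ffunE; move: (gx x).
    by case xA: (x \in A) => //= /eqP.
Qed.

Lemma fiber_send (D A : {set 'I_m}) (j i : 'I_w) g : A \subset D -> i != j ->
  fiber D (send A j g) i = fiber (D :\: A) g i.
Proof.
move=> AD ij; apply/setP=> x; rewrite !inE ffunE.
case xA: (x \in A) => //=.
by rewrite (subsetP AD x xA) eq_sym (negbTE ij).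
Qed.

Lemma gf_peel (D : {set 'I_m}) (J : {set 'I_w}) (j : 'I_w) : j \in J ->
  gf D J = \sum_(A in powerset D) weight #|A| * gf (D :\: A) (J :\ j).
Proof.
move=> jJ; rewrite /gf.
under eq_bigr => f _ do rewrite (bigD1 j) //=.
rewrite (partition_big (fun f => fiber D f j) (mem (powerset D))) /=; last first.
  by move=> f _; rewrite inE; apply/subsetP => x; rewrite inE => /andP[].
apply: eq_bigr => A; rewrite inE => AD; rewrite mulr_sumr.
rewrite (reindex_onto (send A j) (park A)); last first.
  move=> f /andP[_ /eqP fibA]; apply/ffunP => x; rewrite !ffunE.
  by case xA: (x \in A) => //; move: xA; rewrite -fibA inE => /andP[_ /eqP].
apply: eq_big => [g | g /andP[/andP[_ /eqP ->] _]]; first by rewrite -andbA send_throws.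
congr (_ * _); rewrite [in RHS](eq_bigl (fun i => (i \in J) && (i != j))).
  by apply: eq_bigr => i /andP[_ ij]; rewrite fiber_send.
by move=> i; rewrite in_setD1 andbC.
Qed.

(* With no bin available only the empty throw survives. *)
Lemma gf_no_bins (D : {set 'I_m}) : gf D set0 * t ^+ #|D| <= #|D|`!%:R.
Proof.
rewrite /gf; under eq_bigr => f _ do rewrite big_set0.
rewrite sumr_const; have [-> | [x xD]] := set_0Vmem D.
  rewrite cards0 expr0 mulr1 fact0 ler_nat.
  rewrite -(cards1 ([ffun=> bin0] : {ffun 'I_m -> 'I_w})).
  apply: subset_leq_card; apply/subsetP => f; rewrite !inE => /forallP fbin0.
  by apply/eqP/ffunP => x; rewrite ffunE; move: (fbin0 x); rewrite inE => /eqP.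
suff -> : throws D set0 = set0 by rewrite cards0 mulr0n mul0r ler0n.
apply/setP => f; rewrite !inE; apply/negbTE/negP => /forallP /(_ x).
by rewrite xD inE.
Qed.

Lemma sum_powerset_card (D : {set 'I_m}) (G : nat -> R) :
  \sum_(A in powerset D) G #|A| = \sum_(c < #|D|.+1) 'C(#|D|, c)%:R * G c.
Proof.
rewrite (partition_big (fun A : {set 'I_m} => inord #|A| : 'I_#|D|.+1) predT) //=.
apply: eq_bigr => c _.
rewrite (eq_bigl (fun A => A \in [set A : {set 'I_m} | A \subset D & #|A| == c])); last first.
  move=> A; rewrite !inE; case AD: (A \subset D) => //=.
  by rewrite -val_eqE /= inordK // ltnS subset_leq_card.
rewrite (eq_bigr (fun _ => G c)) => [|A]; last by rewrite inE => /andP[_ /eqP ->].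
by rewrite sumr_const cards_draws mulr_natl.
Qed.

Lemma exp_partial_le d : \sum_(c < d.+1) t ^+ c / c`!%:R <= exp t.
Proof.
move: (Estimates.exp_partial_sum_le t d (elimT RleP t_ge0)) => /RleP.
rewrite sum_f_R0E big_mkord; apply: le_trans; rewrite le_eqVlt; apply/orP; left.
by apply/eqP/eq_bigr => c _; rewrite factE INRE RpowE RinvE mulrC.
Qed.

(* The exponential generating function of the bin weights is bounded by
   e^t - t + z t: the weights differ from 1 only at c = 1. *)
Lemma weight_series_le d :
  \sum_(c < d.+1) weight c * t ^+ c / c`!%:R <= exp t - (1 - z) * t.
Proof.
have expS := exp_partial_le d.
have /RleP := exp_ineq1_le t; rewrite RplusE R1E => exp_ge.
have zt : 0 <= z * t by apply: mulr_ge0.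
case: d expS => [|d] expS.
  by rewrite big_ord_recl big_ord0 /weight /= expr0 fact0 divr1 mul1r addr0; lra.
move: expS; rewrite !big_ord_recl /weight /= !expr0 !expr1 fact0 !divr1 !mul1r.
under [X in _ -> _ + (_ + X) <= _]eq_bigr => i _ do rewrite mul1r.
lra.
Qed.

Lemma gf_bound n (J : {set 'I_w}) (D : {set 'I_m}) : #|J| = n ->
  gf D J * t ^+ #|D| <= #|D|`!%:R * (exp t - (1 - z) * t) ^+ n.
Proof.
set E := exp t - (1 - z) * t.
have E_ge0 : 0 <= E.
  have := weight_series_le 0; rewrite big_ord1 /weight /= expr0 fact0 divr1 mul1r.
  exact: le_trans ler01.
have weight_ge0 c : 0 <= weight c by rewrite /weight; case: (c == 1%N).
elim: n J D => [|n IH] J D cardJ.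
  by rewrite (cards0_eq cardJ) expr0 mulr1; exact: gf_no_bins.
have /card_gt0P [j jJ] : (0 < #|J|)%N by rewrite cardJ.
have cardJj : #|J :\ j| = n by move: cardJ; rewrite (cardsD1 j J) jJ => -[].
rewrite (gf_peel D jJ) mulr_suml.
apply: (@le_trans _ _ (\sum_(A in powerset D)
    weight #|A| * t ^+ #|A| * ((#|D| - #|A|)`!%:R * E ^+ n))).
  apply: ler_sum => A; rewrite inE => AD.
  have cardD : #|D| = (#|A| + #|D :\: A|)%N
    by rewrite cardsDS // subnKC // subset_leq_card.
  rewrite {1}cardD exprD mulrACA.
  apply: ler_wpM2l; first by apply: mulr_ge0 => //; apply: exprn_ge0.
  by have := IH (J :\ j) (D :\: A) cardJj; rewrite cardsDS.
rewrite (sum_powerset_card D (fun c => weight c * t ^+ c * ((#|D| - c)`!%:R * E ^+ n))).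
rewrite (eq_bigr (fun c : 'I_#|D|.+1 =>
    #|D|`!%:R * (weight c * t ^+ c / c`!%:R) * E ^+ n)); last first.
  move=> c _; have cD : (c <= #|D|)%N by rewrite -ltnS.
  rewrite -(bin_fact cD) !natrM; field.
  by rewrite pnatr_eq0 -lt0n fact_gt0.
rewrite -mulr_suml -mulr_sumr exprS mulrA.
apply: ler_wpM2r; first exact: exprn_ge0.
by apply: ler_wpM2l; [exact: ler0n | exact: weight_series_le].
Qed.
End GeneratingFunction.

Lemma prod_weight (m w : nat) (z : R) (f : outcome m w) :
  \prod_(j in [set: 'I_w]) weight z #|fiber [set: 'I_m] f j| = z ^+ singletons f.
Proof.
rewrite /singletons /weight (eq_bigr (fun j =>
  if #|[set i : 'I_m | f i == j]| == 1%N then z else 1)); last first.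
  move=> j _; suff -> : fiber [set: 'I_m] f j = [set i | f i == j] by [].
  by apply/setP => x; rewrite !inE.
rewrite -big_mkcondr prodr_const /=.
by congr (z ^+ _); apply: eq_card => j; rewrite !inE unfold_in /= inE.
Qed.

Lemma singletons_gf_bound (m w : nat) (z t : R) : (0 < w)%N -> 0 <= z -> 0 <= t ->
  (\sum_(f : outcome m w) z ^+ singletons f) * t ^+ m
    <= m`!%:R * (exp t - (1 - z) * t) ^+ w.
Proof.
move=> w_gt0 z_ge0 t_ge0; set bin0 := Ordinal w_gt0.
have throwsT : throws bin0 [set: 'I_m] [set: 'I_w] = [set: outcome m w].
  by apply/setP => f; rewrite !inE; apply/forallP => x; rewrite !inE.
have -> : \sum_(f : outcome m w) z ^+ singletons f = gf bin0 z [set: 'I_m] [set: 'I_w].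
  rewrite /gf throwsT; under [RHS]eq_bigr => f _ do rewrite prod_weight.
  by apply: eq_bigl => f; rewrite inE.
have := gf_bound bin0 z_ge0 t_ge0 [set: 'I_m] (cardsT 'I_w).
by rewrite cardsT !card_ord.
Qed.

Local Open Scope R_scope.

Lemma few_singletons_card_bound (m w : nat) (delta z t q : R) :
  (0 < w)%N -> 0 <= z -> 0 <= t ->
  (forall n : nat, INR n < delta * INR m -> q <= z ^ n) ->
  INR #|[set f : outcome m w | few_singletons delta f]| * q * t ^ m
    <= INR (Factorial.fact m) * (exp t - (1 - z) * t) ^ w.
Proof.
move=> w_gt0 /RleP z_ge0 /RleP t_ge0 few_q.
apply/RleP; rewrite !INRE !RpowE !RmultE factE.
apply: le_trans (singletons_gf_bound m w_gt0 z_ge0 t_ge0).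
apply: ler_wpM2r; first exact: exprn_ge0.
rewrite -sum1_card natr_sum mulr_suml.
apply: (@le_trans _ _ (\sum_(f in [set f : outcome m w | few_singletons delta f])
  z ^+ singletons f)).
  apply: ler_sum => f; rewrite inE mul1r /few_singletons => few_f.
  have /few_q /RleP : INR (singletons f) < delta * INR m by case: Rlt_dec few_f.
  by rewrite RpowE.
rewrite [X in (_ <= X)%O](bigID (mem [set f : outcome m w | few_singletons delta f])) /=.
by rewrite lerDl; apply: sumr_ge0 => f _; exact: exprn_ge0.
Qed.

Lemma card_outcomes (m w : nat) : INR #|[set: outcome m w]| = INR w ^ m.
Proof. by rewrite cardsT card_ffun !card_ord INRE natrX RpowE INRE. Qed.
End Counting.

Import Estimates.

Section ProbabilityBound.
Local Open Scope R_scope.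

(* Markov's inequality applied to a^S(f), with the generating-function bound
   at t = m / w and Poissonization: for 0 < a <= 1 and mu = m e^(-m/w),
      P <= (m! e^m / m^m) exp (-(1 - a) mu - delta m ln a). *)
Lemma prob_bound_param (delta a : R) (m w : nat) :
  0 < a <= 1 -> (0 < m)%nat -> (0 < w)%nat ->
  prob_few_singletons m w delta
    <= INR (Factorial.fact m) * exp (INR m) / INR m ^ m
       * exp (- (1 - a) * (INR m * exp (- (INR m / INR w))) - delta * INR m * ln a).
Proof.
intros Ha Hm Hw; unfold prob_few_singletons; rewrite Counting.card_outcomes.
set (M := INR m) in *; set (W := INR w) in *; set (t := M / W).
set (mu := M * exp (- t)); set (F := INR (Factorial.fact m)).
match goal with |- ?N / _ <= _ => set (Nc := N) end.
set (q := exp (delta * M * ln a)).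
assert (HM : 0 < M) by (apply lt_0_INR; exact Hm).
assert (HW : 0 < W) by (apply lt_0_INR; exact Hw).
assert (Hq : forall n : nat, INR n < delta * M -> q <= a ^ n).
{ intros n Hn; unfold q; rewrite <- (exp_ln a) at 2 by lra; rewrite exp_pow.
  apply exp_le; pose proof (ln_nonpos a Ha); nra. }
assert (Hcount := @Counting.few_singletons_card_bound m w delta a t q
  (ssrbool.introT ssrnat.ltP Hw) (Rlt_le _ _ (proj1 Ha))
  (Rlt_le _ _ (Rdiv_lt_0_compat _ _ HM HW)) Hq).
assert (Hpois := pow_exp_sub_le a t w (Rlt_le _ _ (proj1 Ha))
  (Rlt_le _ _ (Rdiv_lt_0_compat _ _ HM HW))).
fold W in Hpois.
replace (W * (t - (1 - a) * t * exp (- t))) with (M - (1 - a) * mu) in Hpois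
  by (unfold mu, t; field; lra).
assert (HtW : t ^ m * W ^ m = M ^ m)
  by (rewrite <- Rpow_mult_distr; f_equal; unfold t; field; lra).
assert (HMm : 0 < M ^ m) by (apply pow_lt; lra).
assert (Hq0 : 0 < q) by apply exp_pos.
apply Rmult_le_reg_r with (q * M ^ m); [nra|].
replace (Nc / W ^ m * (q * M ^ m)) with (Nc * q * t ^ m)
  by (rewrite <- HtW; field; apply pow_nonzero; lra).
replace (F * exp M / M ^ m * exp (- (1 - a) * mu - delta * M * ln a) * (q * M ^ m))
  with (F * exp (M - (1 - a) * mu))
  by (unfold q; replace (M - (1 - a) * mu)
        with (M + (- (1 - a) * mu - delta * M * ln a) + delta * M * ln a) by ring;
      rewrite !exp_plus; field; apply pow_nonzero; lra).
apply Rle_trans with (F * (exp t - (1 - a) * t) ^ w); [exact Hcount|].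
apply Rmult_le_compat_l; [apply pos_INR | exact Hpois].
Qed.

Lemma prob_ge0 (delta : R) (m w : nat) : (0 < w)%nat -> 0 <= prob_few_singletons m w delta.
Proof.
intros Hw; unfold prob_few_singletons; rewrite Counting.card_outcomes.
apply Rmult_le_pos; [apply pos_INR | left; apply Rinv_0_lt_compat, pow_lt, lt_0_INR, Hw].
Qed.

(* Choosing a = delta m / mu in the previous bound and squaring:
      P^2 <= e^2 m exp (-(1 - e delta)^2 m / e). *)
Lemma prob_sq_bound (delta : R) (m w : nat) :
  0 < delta -> delta < / exp 1 -> (0 < m)%nat -> (m <= w)%nat ->
  prob_few_singletons m w delta ^ 2
    <= exp 1 ^ 2 * INR m * exp (- ((1 - exp 1 * delta) ^ 2 * INR m / exp 1)).
Proof.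
intros Hd0 Hd1 Hm Hmw.
set (M := INR m) in *; set (W := INR w) in *; set (e := exp 1) in *.
assert (HM : 1 <= M) by (apply (le_INR 1); exact Hm).
assert (HMW : M <= W) by (apply le_INR; exact Hmw).
assert (He : 0 < e) by apply exp_pos.
pose proof (exp1_mul_lt_one delta Hd1) as Hed.
set (mu := M * exp (- (M / W))).
assert (Hmu : M / e <= mu).
{ unfold mu, Rdiv, e; rewrite <- exp_Ropp; apply Rmult_le_compat_l; [lra|].
  apply exp_le, Ropp_le_contravar.
  apply Rmult_le_reg_r with W; [lra|]; rewrite Rmult_assoc, Rinv_l; lra. }
assert (Hmu0 : 0 < mu) by (unfold mu; apply Rmult_lt_0_compat; [lra | apply exp_pos]).
assert (Hdmu : delta * M < M / e)
  by (unfold Rdiv; rewrite (Rmult_comm M); apply Rmult_lt_compat_r; lra).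
set (a := delta * M / mu).
assert (Ha_mu : a * mu = delta * M) by (unfold a; field; lra).
assert (Ha : 0 < a <= 1).
{ unfold a; split; [apply Rdiv_lt_0_compat; nra|].
  apply Rmult_le_reg_r with mu; [lra|]; unfold Rdiv; rewrite Rmult_assoc, Rinv_l; lra. }
assert (Hbound := prob_bound_param delta a m w Ha Hm ltac:(lia)); fold M W mu in Hbound.
set (S := INR (Factorial.fact m) * exp M / M ^ m) in Hbound.
assert (HS : S ^ 2 <= e ^ 2 * M) by exact (stirling_ratio m Hm).
set (X := - (1 - a) * mu - delta * M * ln a) in Hbound.
assert (HX : 2 * X <= - ((1 - e * delta) ^ 2 * M / e)).
{ pose proof (chernoff_exponent a mu Ha ltac:(lra)) as Hch.
  pose proof (gap_monotone (delta * M) (M / e) mu ltac:(nra) ltac:(lra)) as Hgap.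
  replace (M / e * (1 - delta * M / (M / e)) ^ 2) with ((1 - e * delta) ^ 2 * M / e)
    in Hgap by (field; lra).
  fold a in Hgap; unfold X; rewrite <- Ha_mu; lra. }
pose proof (prob_ge0 delta m w ltac:(lia)) as HP0.
apply Rle_trans with ((S * exp X) ^ 2); [apply pow_incr; lra|].
rewrite Rpow_mult_distr, exp_pow; apply Rmult_le_compat;
  [apply pow2_ge_0 | left; apply exp_pos | exact HS | apply exp_le; simpl INR; lra].
Qed.

End ProbabilityBound.

From mathcomp Require Import all_boot.
From Stdlib Require Import Reals.

Theorem mainTheorem2 (delta beta : R) (k m w : nat)
  (hd0 : (0 < delta)%R) (hd1 : (delta < / exp 1)%R) (hb : (0 < beta)%R)
  (hk : (0 < k)%N) (hm : (0 < m)%N) (hw : (0 < w)%N)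
  (hmw : (m <= w)%N) (hmk : (m <= k)%N)
  (hlow : (2 * exp 1 / (1 - exp 1 * delta) ^ 2
             * (1 + (beta + / 2) * ln (INR k)) <= INR m)%R) :
  (prob_few_singletons m w delta <= Rpower (INR k) (- beta))%R.
Proof.
move/leP: hm => hm; move/leP: hmw => hmw; move/leP: hmk => hmk.
have Hc : (0 < (1 - exp 1 * delta) ^ 2)%R
  by apply pow_lt; have := exp1_mul_lt_one delta hd1; lra.
have HMK : (1 <= INR m <= INR k)%R by split; [apply (le_INR 1) | apply le_INR].
have Hsq := prob_sq_bound delta m w hd0 hd1 hm hmw.
have Htail := tail_numeric _ beta _ _ Hc HMK hlow.
have HP0 := prob_ge0 delta m w ltac:(lia).
have HR : (0 < Rpower (INR k) (- beta))%R by apply exp_pos.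
nra.
Qed.
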